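(* Let $\mathbb{K}$ be a field and let $A\in\mathbb{K}[x]^{m\times n}$ have rank $r\ge 1$. Let $K\in\mathbb{K}[x]^{n\times(n-r)}$ be a right kernel basis of $A$, and let $R\in\mathbb{K}[x]^{r\times n}$ be a left kernel basis of $K$. Then $A$ and $R$ have the same pivot support: $\rho(A)=\rho(R)$.
   Context: A right kernel basis of $A\in\mathbb{K}[x]^{m\times n}$ of rank $r$ is a matrix in $\mathbb{K}[x]^{n\times(n-r)}$ whose columns form a basis of the $\mathbb{K}[x]$-module $\{v\in\mathbb{K}[x]^{n\times 1}: Av=0\}$; a left kernel basis of $K\in\mathbb{K}[x]^{n\times k}$ is a matrix whose rows form a basis of $\{p\in\mathbb{K}[x]^{1\times n}: pK=0\}$ (when $k=0$ this is all of $\mathbb{K}[x]^{1\times n}$). For a row vector $p=[p_1,\dots,p_n]$, $\deg(p)=\max_j\deg(p_j)$; the pivot index of a nonzero $p$ is the largest $j$ with $\deg(p_j)=\deg(p)$, and $p_j$ is its pivot entry. A matrix $P\in\mathbb{K}[x]^{k\times n}$ is in Popov form if it has no zero row, the pivot indices of its rows are strictly increasing, its pivot entries are monic, and in each column containing a pivot entry all other entries have degree strictly less than that pivot entry. The Popov form of a matrix $M$ of rank $r$ is the unique matrix in $\mathbb{K}[x]^{r\times n}$ in Popov form whose rows generate the same $\mathbb{K}[x]$-module as the rows of $M$. The pivot support $\rho(M)\in\mathbb{Z}_{>0}^r$ of $M$ is the tuple of pivot indices of the rows of its Popov form (the empty tuple if $r=0$). *)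

From HB Require Import structures.
From mathcomp Require Import all_boot all_order all_algebra.
From Stdlib Require Import ClassicalEpsilon.
Set Implicit Arguments. Unset Strict Implicit. Unset Printing Implicit Defensive.
Import Order.TTheory GRing.Theory Num.Theory.
Local Open Scope ring_scope.

Section PolyMx.
Variable F : fieldType.
Local Notation P := {poly F}.

Definition prank m n (M : 'M[P]_(m, n)) : nat :=
  \rank (map_mx (@FracField.tofrac P) M).

Definition right_kernel_basis m n k (A : 'M[P]_(m, n)) (K : 'M[P]_(n, k)) : Prop :=
  (forall v : 'cV[P]_n, A *m v = 0 <-> exists c : 'cV[P]_k, v = K *m c) /\
  (forall c : 'cV[P]_k, K *m c = 0 -> c = 0).

Definition left_kernel_basis n k l (K : 'M[P]_(n, k)) (R : 'M[P]_(l, n)) : Prop :=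
  (forall p : 'rV[P]_n, p *m K = 0 <-> exists c : 'rV[P]_l, p = c *m R) /\
  (forall c : 'rV[P]_l, c *m R = 0 -> c = 0).

(* degree of a row vector, shifted by one: max of sizes (size = deg + 1) *)
Definition rowsize n (p : 'rV[P]_n) : nat := (\max_(j < n) size (p ord0 j))%N.

Definition pivot_index n (p : 'rV[P]_n) : nat :=
  (\max_(j < n | size (p ord0 j) == rowsize p) (j : nat))%N.

Definition is_popov k n (M : 'M[P]_(k, n)) : Prop :=
  (forall i : 'I_k, row i M != 0) /\
  (forall i i' : 'I_k, (i < i')%N ->
      (pivot_index (row i M) < pivot_index (row i' M))%N) /\
  (forall (i : 'I_k) (j : 'I_n), (j : nat) = pivot_index (row i M) ->
      M i j \is monic /\
      forall i' : 'I_k, i' != i -> (size (M i' j) < size (M i j))%N).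

Definition same_row_module m k n (M : 'M[P]_(m, n)) (Q : 'M[P]_(k, n)) : Prop :=
  forall p : 'rV[P]_n,
    (exists c : 'rV[P]_m, p = c *m M) <-> (exists d : 'rV[P]_k, p = d *m Q).

Definition popov_form_of m n (M : 'M[P]_(m, n)) (Q : 'M[P]_(prank M, n)) : Prop :=
  is_popov Q /\ same_row_module M Q.

Arguments popov_form_of {m n} M Q.

Definition pivots k n (Q : 'M[P]_(k, n)) : seq nat :=
  [seq pivot_index (row i Q) | i <- enum 'I_k].

(* pivot support: pivot indices of the (unique) Popov form of M *)
Definition pivot_support m n (M : 'M[P]_(m, n)) : seq nat :=
  epsilon (inhabits [::])
    (fun s => exists Q : 'M[P]_(prank M, n), popov_form_of M Q /\ s = pivots Q).

End PolyMx.

From HB Require Import structures.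
From mathcomp Require Import all_boot all_order all_algebra.
From mathcomp Require Import zify boolp.
From Stdlib Require Import ClassicalEpsilon.
Set Implicit Arguments. Unset Strict Implicit. Unset Printing Implicit Defensive.
Import GRing.Theory.
Local Open Scope ring_scope.

(* The pivot support of M is the increasing list of the pivot indices of the
   nonzero vectors of its row module. Indeed, for each such index j take a
   vector w_j of minimal degree with pivot j: the w_j form a Groebner basis for
   the term-over-position order, and interreducing them gives a Popov form whose
   pivots, by the predictable-pivot property, are exactly the pivots of the
   module. Now the row module of A lies in the left kernel of K, which is the
   row module of R. Conversely, over F(x) the row space of A has dimension
   r = n - rank K and lies in the left kernel of K, so the two coincide: every
   p in the row module of R has a nonzero multiple f p in the row module of A,
   and f p has the same pivot as p. *)

Section LeadingMonomial.
Variables (F : fieldType) (n : nat).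
Local Notation P := {poly F}.
Implicit Types (p q : 'rV[P]_n) (f : P).

Lemma gtn_size (q : P) e : q`_e != 0 -> (e < size q)%N.
Proof. by rewrite ltnNge; apply: contra => /leq_sizeP ->. Qed.

Lemma leq_size_rowsize p j : (size (p ord0 j) <= rowsize p)%N.
Proof. exact: (leq_bigmax_cond j). Qed.

Lemma rowsize_leq p D : (forall j, size (p ord0 j) <= D)%N -> (rowsize p <= D)%N.
Proof. by move=> H; apply/bigmax_leqP => j _. Qed.

Lemma pivot_index_eq p (j0 : 'I_n) : size (p ord0 j0) = rowsize p ->
  (forall j : 'I_n, (j0 < j)%N -> (size (p ord0 j) < rowsize p)%N) ->
  pivot_index p = j0.
Proof.
move=> size_j0 lt_above; apply/eqP; rewrite eqn_leq; apply/andP; split.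
  apply/bigmax_leqP => j /eqP size_j; rewrite leqNgt; apply/negP => /lt_above.
  by rewrite size_j ltnn.
by apply: (leq_bigmax_cond (F := fun j : 'I_n => (j : nat)) j0); rewrite size_j0.
Qed.

Lemma rowV_neq0 p : p != 0 -> exists j, p ord0 j != 0.
Proof.
move=> pn0; apply/existsP; apply: contraR pn0 => /existsPn p0.
by apply/eqP/rowP => j; rewrite mxE; apply/eqP/negPn.
Qed.

Lemma rowsize_gt0 p : p != 0 -> (0 < rowsize p)%N.
Proof.
move=> /rowV_neq0 [j pj0]; apply: leq_trans (leq_size_rowsize p j).
by rewrite size_poly_gt0.
Qed.

Lemma pivot_indexP p : p != 0 -> exists j0 : 'I_n,
  [/\ pivot_index p = j0, size (p ord0 j0) = rowsize p &
      forall j : 'I_n, (j0 < j)%N -> (size (p ord0 j) < rowsize p)%N].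
Proof.
move=> pn0; have [j1 _] := rowV_neq0 pn0.
have n0 : (0 < #|'I_n|)%N by apply/card_gt0P; exists j1.
have [j2 _ Hj2] := eq_bigmax_cond (fun j => size (p ord0 j)) n0.
pose A := [pred j | size (p ord0 j) == rowsize p].
have A0 : (0 < #|A|)%N by apply/card_gt0P; exists j2; rewrite inE /rowsize Hj2.
have [j0 /eqP Hj0 Hpiv] := eq_bigmax_cond (fun j : 'I_n => j : nat) A0.
exists j0; split => //.
move=> j lt_j0j; rewrite ltn_neqAle leq_size_rowsize andbT.
apply: contraTN lt_j0j => /eqP Aj; rewrite -leqNgt -Hpiv.
by apply: leq_bigmax_cond; rewrite inE Aj.
Qed.

(* The monomial x^e e_j of 'rV[P]_n is encoded as e * n + j: comparing codes
   is the term-over-position order, in which the leading monomial of p is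
   x^(rowsize p - 1) e_(pivot_index p). *)
Definition monomials_lt p B := forall (j : 'I_n) e, (p ord0 j)`_e != 0 -> (e * n + j < B)%N.

Definition has_lead p d (j : 'I_n) := (p ord0 j)`_d != 0 /\ monomials_lt p (d * n + j).+1.

Lemma top_code_inj e e' (j j' : 'I_n) : (e * n + j = e' * n + j')%N -> e = e' /\ j = j'.
Proof.
move=> E; have n0 : (0 < n)%N := leq_ltn_trans (leq0n j) (ltn_ord j).
have Ee : e = e'.
  by move: (f_equal (divn ^~ n) E); rewrite /= !divnMDl // !divn_small // !addn0.
by split=> //; apply: val_inj; move: E; rewrite Ee /=; lia.
Qed.

Lemma monomials_ltW p B B' : (B <= B')%N -> monomials_lt p B -> monomials_lt p B'.
Proof. by move=> le_BB' H j e /H /leq_trans; apply. Qed.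

Lemma monomials_lt0 B : monomials_lt 0 B.
Proof. by move=> j e; rewrite mxE coef0 eqxx. Qed.

Lemma monomials_ltD p q B : monomials_lt p B -> monomials_lt q B -> monomials_lt (p + q) B.
Proof.
move=> Hp Hq j e; rewrite mxE coefD.
have [p0|/Hp //] := eqVneq ((p ord0 j)`_e) 0.
by rewrite p0 add0r => /Hq.
Qed.

Lemma monomials_ltN p B : monomials_lt p B -> monomials_lt (- p) B.
Proof. by move=> Hp j e; rewrite mxE coefN oppr_eq0 => /Hp. Qed.

Lemma monomials_lt_sum (I : finType) (A : pred I) (G : I -> 'rV[P]_n) B :
  (forall i, A i -> monomials_lt (G i) B) -> monomials_lt (\sum_(i | A i) G i) B.
Proof.
move=> H; apply: (big_ind (fun x => monomials_lt x B)) => //.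
- exact: monomials_lt0.
- by move=> x y; apply: monomials_ltD.
Qed.

Lemma monomials_lt_rowsize p : monomials_lt p (rowsize p * n).
Proof.
move=> j e /gtn_size lt_e; have := leq_size_rowsize p j; have := ltn_ord j.
nia.
Qed.

Lemma has_lead_pivot p d j : has_lead p d j ->
  [/\ p != 0, size (p ord0 j) = d.+1, rowsize p = d.+1 & pivot_index p = j].
Proof.
move=> [pd0 Hp].
have size_le : forall j' : 'I_n, (size (p ord0 j') <= d.+1)%N.
  move=> j'; rewrite leqNgt; apply/negP => lt_d.
  have : (p ord0 j')`_(size (p ord0 j')).-1 != 0.
    by rewrite -lead_coefE lead_coef_eq0 -size_poly_gt0; lia.
  move/Hp; have := ltn_ord j; have := ltn_ord j'.
  have : (d.+1 * n <= (size (p ord0 j')).-1 * n)%N by apply: leq_mul; lia.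
  nia.
have size_j : size (p ord0 j) = d.+1.
  by apply/eqP; rewrite eqn_leq size_le gtn_size.
have rs : rowsize p = d.+1.
  by apply/eqP; rewrite eqn_leq (rowsize_leq size_le) -size_j leq_size_rowsize.
split => //.
- by apply: contraNneq pd0 => ->; rewrite mxE coef0.
apply: pivot_index_eq; first by rewrite size_j rs.
move=> j' lt_jj'; rewrite rs ltn_neqAle size_le andbT; apply/eqP => size_j'.
have : (p ord0 j')`_d != 0.
  by rewrite -[d]/(d.+1.-1) -size_j' -lead_coefE lead_coef_eq0 -size_poly_gt0 size_j'.
by move/Hp; lia.
Qed.

Lemma pivot_has_lead p : p != 0 ->
  exists j : 'I_n, pivot_index p = j /\ has_lead p (rowsize p).-1 j.
Proof.
move=> pn0; have rs := rowsize_gt0 pn0.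
have [j [Hj size_j Hgt]] := pivot_indexP pn0; exists j; split => //; split.
  by rewrite -size_j -lead_coefE lead_coef_eq0 -size_poly_gt0 size_j.
move=> j' e /gtn_size lt_e; have := leq_size_rowsize p j'; have := ltn_ord j'.
have [/Hgt lt_j'|le_j'j] := ltnP j j' => lt_j'n le_rs.
  have : (e * n + n <= (rowsize p).-1 * n)%N.
    by rewrite -mulSnr leq_mul2r; apply/orP; right; lia.
  lia.
have : (e * n <= (rowsize p).-1 * n)%N by rewrite leq_mul2r; apply/orP; right; lia.
lia.
Qed.

Lemma has_leadD p q d j : has_lead p d j -> monomials_lt q (d * n + j) ->
  has_lead (p + q) d j.
Proof.
move=> [pd0 Hp] Hq; split; last by apply: monomials_ltD => //; apply: monomials_ltW Hq.
rewrite mxE coefD; have -> : (q ord0 j)`_d = 0.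
  by apply/eqP; apply: contraT => /Hq; rewrite ltnn.
by rewrite addr0.
Qed.

Lemma has_leadZ f p d j : f != 0 -> has_lead p d j ->
  has_lead (f *: p) ((size f).-1 + d) j.
Proof.
move=> f0 [pd0 Hp]; have [_ size_j _ _] := has_lead_pivot (conj pd0 Hp).
have sf : (0 < size f)%N by rewrite size_poly_gt0.
split.
  have pj0 : p ord0 j != 0 by rewrite -size_poly_gt0 size_j.
  have size_fpj : size (f * p ord0 j) = ((size f).-1 + d).+1.
    by rewrite size_mul // size_j addnS /= -addSn prednK.
  by rewrite mxE -[X in _`_X]/(((size f).-1 + d).+1.-1) -size_fpj -lead_coefE
    lead_coef_eq0 mulf_neq0.
move=> j' e; rewrite mxE => fpj'e0; have lt_e := gtn_size fpj'e0.
have pj'0 : p ord0 j' != 0 by apply: contraNneq fpj'e0 => ->; rewrite mulr0 coef0.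
have sp : (0 < size (p ord0 j'))%N by rewrite size_poly_gt0.
have /Hp top : (p ord0 j')`_(size (p ord0 j')).-1 != 0.
  by rewrite -lead_coefE lead_coef_eq0.
have le_e : (e <= (size f).-1 + (size (p ord0 j')).-1)%N.
  rewrite -ltnS (leq_trans lt_e) // (leq_trans (size_polyMleq _ _)) //.
  by rewrite -(prednK sf) -(prednK sp) /= addnS.
have : (e * n <= ((size f).-1 + (size (p ord0 j')).-1) * n)%N.
  by rewrite leq_mul2r le_e orbT.
rewrite !mulnDl; lia.
Qed.

End LeadingMonomial.

Section PredictablePivot.
Variables (F : fieldType) (k n : nat).
Local Notation P := {poly F}.

Lemma pivot_indexZ (f : P) (p : 'rV[P]_n) : f != 0 -> p != 0 ->
  f *: p != 0 /\ pivot_index (f *: p) = pivot_index p.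
Proof.
move=> f0 /pivot_has_lead [j [-> lead_p]].
by have [fp0 _ _ ->] := has_lead_pivot (has_leadZ f0 lead_p).
Qed.

(* Distinct pivots give the nonzero terms c_i *: row i Q distinct leading
   monomials, so the largest one survives in c *m Q. *)
Lemma predictable_pivot (Q : 'M[P]_(k, n)) :
  (forall i, row i Q != 0) -> injective (fun i => pivot_index (row i Q)) ->
  forall c : 'rV_k, c != 0 ->
  c *m Q != 0 /\ exists i, pivot_index (c *m Q) = pivot_index (row i Q).
Proof.
move=> Qnz Qinj c /rowV_neq0 [i1 ci1].
have [jv Hjv] := fin_all_exists (fun i => pivot_has_lead (Qnz i)).
pose t i := c ord0 i *: row i Q.
pose code i := (((size (c ord0 i)).-1 + (rowsize (row i Q)).-1) * n + jv i)%N.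
have lead_t i : c ord0 i != 0 ->
    has_lead (t i) ((size (c ord0 i)).-1 + (rowsize (row i Q)).-1) (jv i).
  by move=> ci0; apply: has_leadZ => //; case: (Hjv i).
have [i0 ci00 max_i0] := @arg_maxnP _ i1 (fun i => c ord0 i != 0) code ci1.
have lt_t i : i != i0 -> monomials_lt (t i) (code i0).
  move=> ne_ii0; have [ci0|ci0] := eqVneq (c ord0 i) 0.
    by rewrite /t ci0 scale0r; apply: monomials_lt0.
  apply: monomials_ltW (proj2 (lead_t i ci0)).
  have le_code : (code i <= code i0)%N := max_i0 i ci0.
  rewrite ltn_neqAle le_code andbT; apply: contra ne_ii0 => /eqP.
  move=> /top_code_inj [_ jv_eq]; apply/eqP/Qinj => /=.
  by case: (Hjv i) => -> _; case: (Hjv i0) => -> _; rewrite jv_eq.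
have cQ : c *m Q = t i0 + \sum_(i | i != i0) t i by rewrite mulmx_sum_row (bigD1 i0).
have [cQ0 _ _ piv] :=
  has_lead_pivot (has_leadD (lead_t i0 ci00) (monomials_lt_sum lt_t)).
by rewrite cQ; split => //; exists i0; rewrite piv; case: (Hjv i0).
Qed.

End PredictablePivot.

Section RowModule.
Variable F : fieldType.
Local Notation P := {poly F}.
Local Notation tofrac := (@FracField.tofrac P).

Definition in_rowmod m n (M : 'M[P]_(m, n)) (p : 'rV[P]_n) := exists c, p = c *m M.

Definition module_pivot m n (M : 'M[P]_(m, n)) (x : nat) :=
  exists p, [/\ in_rowmod M p, p != 0 & pivot_index p = x].

Definition submod_closed n (S : 'rV[P]_n -> Prop) :=
  [/\ S 0, forall a b, S a -> S b -> S (a + b) & forall (c : P) a, S a -> S (c *: a)].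

Section InRowmod.
Variables (m n : nat) (M : 'M[P]_(m, n)).

Lemma in_rowmodD p q : in_rowmod M p -> in_rowmod M q -> in_rowmod M (p + q).
Proof. by move=> [a ->] [b ->]; exists (a + b); rewrite mulmxDl. Qed.

Lemma in_rowmodB p q : in_rowmod M p -> in_rowmod M q -> in_rowmod M (p - q).
Proof. by move=> [a ->] [b ->]; exists (a - b); rewrite mulmxBl. Qed.

Lemma in_rowmodZ (c : P) p : in_rowmod M p -> in_rowmod M (c *: p).
Proof. by move=> [a ->]; exists (c *: a); rewrite scalemxAl. Qed.

Lemma in_rowmod_closed : submod_closed (in_rowmod M).
Proof.
by split; [exists 0; rewrite mul0mx | exact: in_rowmodD | exact: in_rowmodZ].
Qed.

End InRowmod.

Lemma in_rowmod_row m n (M : 'M[P]_(m, n)) i : in_rowmod M (row i M).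
Proof. by exists (delta_mx 0 i); rewrite -rowE. Qed.

Lemma in_rowmod_trans m k n (M : 'M[P]_(m, n)) (Q : 'M[P]_(k, n)) :
  (forall i, in_rowmod M (row i Q)) -> forall p, in_rowmod Q p -> in_rowmod M p.
Proof.
move=> H p [d ->]; have [C HC] := fin_all_exists H.
exists (d *m \matrix_i C i); rewrite -mulmxA; congr (_ *m _).
by apply/row_matrixP => i; rewrite row_mul rowK HC.
Qed.

Lemma tofrac_num_den (x : {fraction P}) :
  exists a b : P, b != 0 /\ tofrac a = tofrac b * x.
Proof.
elim/quotW: x => r; exists (\n_r), (\d_r); split; first exact: denom_ratioP.
unlock FracField.tofrac; rewrite /= -[_ * _]/(FracField.mul _ _) -FracField.pi_mul.
apply/eqmodP; rewrite /= FracField.equivfE.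
by rewrite !numden_Ratio ?oner_eq0 ?mul1r ?denom_ratioP //= mulrC.
Qed.

Lemma rowV_clear_den k (v : 'rV[{fraction P}]_k) :
  exists f (c : 'rV[P]_k), f != 0 /\ map_mx tofrac c = tofrac f *: v.
Proof.
have num_den i : exists ab : P * P, ab.2 != 0 /\ tofrac ab.1 = tofrac ab.2 * v ord0 i.
  by have [a [b ab_v]] := tofrac_num_den (v ord0 i); exists (a, b).
have [ab Hab] := fin_all_exists num_den.
exists (\prod_i (ab i).2), (\row_i ((ab i).1 * \prod_(l | l != i) (ab l).2)).
split; first by apply/prodf_neq0 => i _; case: (Hab i).
apply/rowP => i; rewrite !mxE rmorphM -[X in X * _ = _]/(tofrac (ab i).1).
by rewrite (proj2 (Hab i)) [in RHS](bigD1 i) //= rmorphM mulrAC.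
Qed.

Lemma map_tofrac_inj m n : injective (map_mx tofrac : 'M[P]_(m, n) -> _).
Proof.
move=> X Y /matrixP XY; apply/matrixP => i j.
by have := XY i j; rewrite !mxE => /eqP; rewrite tofrac_eq => /eqP.
Qed.

Lemma map_tofrac_mx0 m n : map_mx tofrac (0 : 'M[P]_(m, n)) = 0.
Proof. by apply/matrixP => i j; rewrite !mxE. Qed.

Lemma prank_row_free k n (Q : 'M[P]_(k, n)) :
  (forall c : 'rV_k, c *m Q = 0 -> c = 0) -> prank Q = k.
Proof.
move=> Qfree; apply/eqP; rewrite -[_ == _]/(row_free _) -kermx_eq0.
apply/eqP/row_matrixP => i; rewrite row0.
set v := row i _.
have v0 : v *m map_mx tofrac Q = 0 by rewrite /v -row_mul mulmx_ker row0.
have [f [c [f0 Ec]]] := rowV_clear_den v.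
have c0 : c = 0.
  apply/Qfree/map_tofrac_inj.
  by rewrite map_mxM Ec -scalemxAl v0 scaler0 map_tofrac_mx0.
move: Ec; rewrite c0 map_tofrac_mx0 => /esym /eqP.
by rewrite scaler_eq0 tofrac_eq0 (negbTE f0) => /eqP.
Qed.

Lemma map_tofrac_submx m k n (M : 'M[P]_(m, n)) (Q : 'M[P]_(k, n)) :
  (forall i, in_rowmod M (row i Q)) -> (map_mx tofrac Q <= map_mx tofrac M)%MS.
Proof.
move=> H; apply/row_subP => i; have [c Ec] := H i.
by rewrite -map_row Ec map_mxM submxMl.
Qed.

End RowModule.

Section Reduction.
Variables (F : fieldType) (n : nat).
Local Notation P := {poly F}.
Variables (J : 'I_n -> Prop) (dg : 'I_n -> nat) (g : 'I_n -> 'rV[P]_n).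
Hypothesis g_lead : forall j, J j ->
  ((g j) ord0 j)`_(dg j) = 1 /\ monomials_lt (g j) (dg j * n + j).+1.

Definition reduced (s : 'rV[P]_n) :=
  forall (j : 'I_n) e, J j -> (dg j <= e)%N -> (s ord0 j)`_e = 0.

Definition reducible_lt (s : 'rV[P]_n) N :=
  forall (j : 'I_n) e, J j -> (dg j <= e)%N -> (s ord0 j)`_e != 0 -> (e * n + j < N)%N.

Lemma lead_shift j e (a : F) : J j -> (dg j <= e)%N ->
  (((a *: 'X^(e - dg j)) *: g j) ord0 j)`_e = a /\
  monomials_lt ((a *: 'X^(e - dg j)) *: g j) (e * n + j).+1.
Proof.
move=> Jj le_dg_e; have [g1 g_lt] := g_lead Jj.
have coef_t j' e' : (((a *: 'X^(e - dg j)) *: g j) ord0 j')`_e' =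
    a * (if (e' < e - dg j)%N then 0 else ((g j) ord0 j')`_(e' - (e - dg j))).
  by rewrite mxE -scalerAl coefZ coefXnM.
split; first by rewrite coef_t ltnNge leq_subr /= subKn // g1 mulr1.
move=> j' e'; rewrite coef_t; set k := (e - dg j)%N.
case: ltnP => [_|le_ke']; first by rewrite mulr0 eqxx.
rewrite /= mulf_eq0 negb_or => /andP [_ /g_lt].
have -> : e = (k + dg j)%N by rewrite subnK.
rewrite -{2}(subnK le_ke') !mulnDl; lia.
Qed.

(* The division algorithm: cancel the largest reducible monomial by a monomial
   multiple of some g j; its code bounds the induction. *)
Lemma reduce_bounded S : submod_closed S -> (forall j, J j -> S (g j)) ->
  forall N v B, monomials_lt v B -> reducible_lt v N ->
  exists u s, [/\ S u, reduced s, monomials_lt s B & v = u + s].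
Proof.
move=> [S0 SD SZ] Sg; elim=> [|N IH] v B vB vN.
  exists 0, v; split=> //; last by rewrite add0r.
  by move=> j e Jj le_e; apply/eqP; apply: contraT => /vN; apply.
have [[j [e [Jj le_e ve0 code_N]]]|none] := pselect (exists (j : 'I_n) e,
    [/\ J j, (dg j <= e)%N, (v ord0 j)`_e != 0 & (e * n + j = N)%N]); last first.
  apply: IH => // j e Jj le_e ve0; have := vN j e Jj le_e ve0.
  rewrite ltnS leq_eqVlt => /orP [/eqP code_N|//].
  by case: none; exists j, e.
set t := ((v ord0 j)`_e *: 'X^(e - dg j)) *: g j.
have [t_e t_lt] : (t ord0 j)`_e = (v ord0 j)`_e /\ monomials_lt t (e * n + j).+1.
  exact: lead_shift.
have St : S t by apply/SZ/Sg.
clearbody t.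
have [u [s [Su rs sB vt]]] :
    exists u s, [/\ S u, reduced s, monomials_lt s B & v - t = u + s].
  apply: IH.
    apply: monomials_ltD => //; apply/monomials_ltN/(monomials_ltW _ t_lt).
    exact: vB ve0.
  move=> j' e' Jj' le_e' vte0; rewrite ltnNge; apply/negP => ge_N.
  move: vte0; rewrite !mxE coefB.
  have [lt_N|le_code] := ltnP N (e' * n + j').
    have -> : (t ord0 j')`_e' = 0 by apply/eqP; apply: contraT => /t_lt; lia.
    by rewrite subr0 => /(vN _ _ Jj' le_e'); lia.
  have [-> ->] : e' = e /\ j' = j.
    by apply: top_code_inj; apply/eqP; rewrite eqn_leq code_N le_code ge_N.
  by rewrite t_e subrr eqxx.
exists (u + t), s; split => //; first exact: SD.
by rewrite -addrA [t + s]addrC addrA -vt subrK.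
Qed.

Lemma reduce S : submod_closed S -> (forall j, J j -> S (g j)) ->
  forall v B, monomials_lt v B ->
  exists u s, [/\ S u, reduced s, monomials_lt s B & v = u + s].
Proof. by move=> SS Sg v B vB; apply: (reduce_bounded SS Sg vB) => j e _ _; apply: vB. Qed.

End Reduction.

Lemma ltn_enum_val n (A : {set 'I_n}) (i i' : 'I_#|A|) :
  (i < i')%N -> (enum_val i < enum_val i')%N.
Proof.
move=> lt_ii'; pose x0 := enum_val i.
rewrite (enum_val_nth x0 i) (enum_val_nth x0 i').
have sorted_A : sorted (relpre val ltn) (enum A).
  rewrite -deprecated_filter_index_enum; apply: sorted_filter.
    by move=> a b c; apply: ltn_trans.
  have := deprecated_filter_index_enum (T := 'I_n) xpredT; rewrite filter_predT => ->.
  by rewrite -sorted_map val_enum_ord iota_ltn_sorted.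
apply: (sorted_ltn_nth _ _ sorted_A) => //.
- by move=> a b c; apply: ltn_trans.
- by rewrite inE -cardE.
- by rewrite inE -cardE.
Qed.

Section PopovExistence.
Variables (F : fieldType) (m n : nat) (M : 'M[{poly F}]_(m, n)).
Local Notation P := {poly F}.
Local Notation J j := (module_pivot M (nat_of_ord j)).

Definition minimal_row (j : 'I_n) (w : 'rV[P]_n) d :=
  [/\ in_rowmod M w, (w ord0 j)`_d = 1, monomials_lt w (d * n + j).+1 &
      forall p, in_rowmod M p -> p != 0 -> pivot_index p = j -> (d < rowsize p)%N].

Lemma minimal_row_exists (j : 'I_n) : J j -> exists w d, minimal_row j w d.
Proof.
move=> Jj; pose has_row d := `[< exists p,
  [/\ in_rowmod M p, p != 0, pivot_index p = j & rowsize p = d] >].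
have : exists d, has_row d.
  by have [p [Mp p0 pj]] := Jj; exists (rowsize p); apply/asboolP; exists p.
case/ex_minnP => d /asboolP [p [Mp p0 pj <-]] d_min.
have [j' [pj' lead_p]] := pivot_has_lead p0.
have {j' pj'} lead_p : has_lead p (rowsize p).-1 j.
  by rewrite (_ : j = j') //; apply: val_inj; rewrite /= -pj -pj'.
pose c := (p ord0 j)`_(rowsize p).-1.
have c0 : c != 0 by case: lead_p.
exists (c^-1%:P *: p), (rowsize p).-1; split.
- exact: in_rowmodZ.
- by rewrite mxE coefCM mulVf.
- have := has_leadZ (p := p) (f := c^-1%:P) _ lead_p.
  by rewrite polyC_eq0 invr_eq0 size_polyC invr_eq0 c0 add0n => /(_ isT) [].
move=> q Mq q0 qj; have rs := rowsize_gt0 p0.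
have : (rowsize p <= rowsize q)%N.
  by apply: d_min; apply/asboolP; exists q.
lia.
Qed.

Section MinimalPivotRows.
Variables (w : 'I_n -> 'rV[P]_n) (dg : 'I_n -> nat).
Hypothesis w_min : forall j, J j -> minimal_row j (w j) (dg j).

Lemma reduced_rowmod_eq0 s : in_rowmod M s -> reduced (fun j => J j) dg s -> s = 0.
Proof.
move=> Ms rs; apply/eqP; apply: contraT => s0.
have [j [sj [lead_s _]]] := pivot_has_lead s0.
have Jj : J j by exists s.
have [_ _ _ /(_ s Ms s0 sj) lt_dg] := w_min Jj.
have le_dg : (dg j <= (rowsize s).-1)%N by rewrite -ltnS prednK // rowsize_gt0.
by move: lead_s; rewrite rs ?eqxx.
Qed.

Definition popov_row j p :=
  [/\ in_rowmod M p, (p ord0 j)`_(dg j) = 1, monomials_lt p (dg j * n + j).+1 &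
      forall j', j' != j -> J j' -> (size (p ord0 j') <= dg j')%N].

(* The row is x^(dg j) e_j minus the reduction of x^(dg j) e_j - w j. *)
Lemma popov_row_exists j : J j -> exists p, popov_row j p.
Proof.
move=> Jj; have [Mw w1 w_lt _] := w_min Jj.
pose E : 'rV[P]_n := 'X^(dg j) *: delta_mx 0 j.
have coef_E j' e : (E ord0 j')`_e = ((j' == j) && (e == dg j))%:R.
  rewrite !mxE eqxx /=; case: (j' == j); first by rewrite mulr1 coefXn.
  by rewrite mulr0 coef0.
clearbody E.
have Ew_lt : monomials_lt (E - w j) (dg j * n + j).
  move=> j' e; rewrite !mxE coefB coef_E.
  case: andP => [[/eqP -> /eqP ->]|not_jdg]; first by rewrite w1 subrr eqxx.
  rewrite sub0r oppr_eq0 => /w_lt; rewrite ltnS leq_eqVlt => /orP [/eqP code|//].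
  by case: not_jdg; have [-> ->] := top_code_inj code; rewrite !eqxx.
have g_lead j' : J j' ->
    ((w j') ord0 j')`_(dg j') = 1 /\ monomials_lt (w j') (dg j' * n + j').+1.
  by case/w_min.
have Mw' j' : J j' -> in_rowmod M (w j') by case/w_min.
have [u [s [Mu rs s_lt Ew]]] := reduce g_lead (in_rowmod_closed M) Mw' Ew_lt.
have p_E : w j + u = E - s.
  by rewrite -[E](subrK (w j)) Ew [_ + w j]addrC addrA addrK.
exists (w j + u); split.
- exact: in_rowmodD.
- by rewrite p_E !mxE coefB coef_E !eqxx rs // subr0.
- rewrite p_E; apply: monomials_ltD; last first.
    by apply/monomials_ltN/(monomials_ltW _ s_lt).
  by move=> j' e; rewrite coef_E; case: andP => [[/eqP -> /eqP ->]|]; rewrite ?eqxx.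
move=> j' ne_j'j Jj'; apply/leq_sizeP => e le_e.
by rewrite p_E !mxE coefB coef_E (negbTE ne_j'j) rs // subr0.
Qed.

Lemma popov_row_lead j p : popov_row j p ->
  [/\ p != 0, pivot_index p = j, size (p ord0 j) = (dg j).+1 & p ord0 j \is monic].
Proof.
move=> [_ p1 p_lt _]; have pj0 : (p ord0 j)`_(dg j) != 0 by rewrite p1 oner_eq0.
have [p0 size_j _ pj] := has_lead_pivot (conj pj0 p_lt).
by split => //; rewrite monicE lead_coefE size_j p1.
Qed.

Section PopovMatrix.
Variable p : 'I_n -> 'rV[P]_n.
Hypothesis p_row : forall j, J j -> popov_row j (p j).

Definition pivot_set := [set j : 'I_n | `[< J j >]].

Definition popov_mx := \matrix_(i < #|pivot_set|) p (enum_val i).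

Lemma J_enum_val (i : 'I_#|pivot_set|) : J (enum_val i).
Proof. by have := enum_valP i; rewrite inE => /asboolP. Qed.

Lemma popov_row_enum_val (i : 'I_#|pivot_set|) : popov_row (enum_val i) (p (enum_val i)).
Proof. exact/p_row/J_enum_val. Qed.

Lemma row_popov_mx_neq0 i : row i popov_mx != 0.
Proof. by rewrite rowK; have [] := popov_row_lead (popov_row_enum_val i). Qed.

Lemma pivot_popov_mx i : pivot_index (row i popov_mx) = enum_val i.
Proof. by rewrite rowK; have [] := popov_row_lead (popov_row_enum_val i). Qed.

Lemma popov_mx_is_popov : is_popov popov_mx.
Proof.
split; [exact: row_popov_mx_neq0 | split].
  by move=> i i' lt_ii'; rewrite !pivot_popov_mx; apply: ltn_enum_val.
move=> i j; rewrite pivot_popov_mx => /val_inj ->; rewrite mxE.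
have [_ _ size_i monic_i] := popov_row_lead (popov_row_enum_val i).
split => // i' ne_i'i; rewrite mxE size_i ltnS.
have [_ _ _ -> //] := popov_row_enum_val i'; last exact: J_enum_val.
by apply: contra ne_i'i => /eqP /enum_val_inj ->.
Qed.

Lemma popov_mx_rows_in_rowmod i : in_rowmod M (row i popov_mx).
Proof. by rewrite rowK; have [] := popov_row_enum_val i. Qed.

Lemma in_rowmod_popov_mx q : in_rowmod M q -> in_rowmod popov_mx q.
Proof.
move=> Mq; have p_lead j : J j ->
    ((p j) ord0 j)`_(dg j) = 1 /\ monomials_lt (p j) (dg j * n + j).+1.
  by case/p_row.
have Qp j : J j -> in_rowmod popov_mx (p j).
  move=> Jj; have Pj : j \in pivot_set by rewrite inE; apply/asboolP.
  by have := in_rowmod_row popov_mx (enum_rank_in Pj j); rewrite rowK enum_rankK_in.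
have [u [s [Qu rs _ qus]]] := reduce p_lead (in_rowmod_closed popov_mx) Qp
  (@monomials_lt_rowsize _ _ q).
have Ms : in_rowmod M s.
  have -> : s = q - u by rewrite qus addrAC subrr add0r.
  by apply: in_rowmodB Mq (in_rowmod_trans popov_mx_rows_in_rowmod Qu).
by rewrite qus (reduced_rowmod_eq0 Ms rs) addr0.
Qed.

Lemma popov_mx_rank : #|pivot_set| = prank M.
Proof.
have -> : #|pivot_set| = prank popov_mx.
  apply/esym/prank_row_free => c cQ0; apply/eqP; apply: contraT => c0.
  have Qinj : injective (fun i => pivot_index (row i popov_mx)).
    by move=> i i' /=; rewrite !pivot_popov_mx => /val_inj /enum_val_inj.
  by have [] := predictable_pivot row_popov_mx_neq0 Qinj c0; rewrite cQ0 eqxx.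
apply/eqP; rewrite eqn_leq; apply/andP; split; apply/mxrankS/map_tofrac_submx.
  exact: popov_mx_rows_in_rowmod.
by move=> i; apply/in_rowmod_popov_mx/in_rowmod_row.
Qed.

Lemma popov_mx_popov_form : exists Q : 'M_(prank M, n), @popov_form_of _ _ _ M Q.
Proof.
rewrite /popov_form_of -popov_mx_rank; exists popov_mx.
split; first exact: popov_mx_is_popov.
move=> q; split; first exact: in_rowmod_popov_mx.
by apply: in_rowmod_trans; apply: popov_mx_rows_in_rowmod.
Qed.

End PopovMatrix.
End MinimalPivotRows.

Lemma popov_form_exists : exists Q : 'M_(prank M, n), @popov_form_of _ _ _ M Q.
Proof.
have min_row j : exists wd : 'rV[P]_n * nat, J j -> minimal_row j wd.1 wd.2.
  have [/minimal_row_exists [w [d w_min]]|NJ] := pselect (J j); first by exists (w, d).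
  by exists (0, 0%N) => /NJ.
have [wd w_min] := fin_all_exists min_row.
have prow j : exists p, J j -> popov_row (fun j => (wd j).2) j p.
  have [Jj|NJ] := pselect (J j); last by exists 0 => /NJ.
  have [p Hp] := popov_row_exists w_min Jj; by exists p.
have [p p_row] := fin_all_exists prow.
exact: (popov_mx_popov_form (w := fun j => (wd j).1) w_min p_row).
Qed.

End PopovExistence.

Section PivotSupport.
Variable F : fieldType.
Local Notation P := {poly F}.

Lemma popov_pivots m k n (M : 'M[P]_(m, n)) (Q : 'M[P]_(k, n)) :
  is_popov Q -> same_row_module M Q ->
  sorted ltn (pivots Q) /\ forall x, x \in pivots Q <-> module_pivot M x.
Proof.
move=> [Qnz [Qinc _]] MQ.
have Qinj : injective (fun i => pivot_index (row i Q)).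
  move=> i i' /= piv_ii'; case: (ltngtP i i') => [|lt_i'i|/val_inj //] .
    by move=> /Qinc; rewrite piv_ii' ltnn.
  by have := Qinc _ _ lt_i'i; rewrite piv_ii' ltnn.
split.
  rewrite /pivots; apply: (homo_sorted (e := relpre val ltn)).
    by move=> i i' /Qinc.
  by rewrite -sorted_map val_enum_ord iota_ltn_sorted.
move=> x; split.
  by case/mapP => i _ ->; exists (row i Q); split => //; apply/MQ/in_rowmod_row.
move=> [q [/MQ [d ->] q0 <-]].
have d0 : d != 0 by apply: contraNneq q0 => ->; rewrite mul0mx.
by have [_ [i ->]] := predictable_pivot Qnz Qinj d0; apply: map_f; rewrite mem_enum.
Qed.

Lemma pivot_support_spec m n (M : 'M[P]_(m, n)) :
  sorted ltn (pivot_support M) /\ forall x, x \in pivot_support M <-> module_pivot M x.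
Proof.
have [Q MQ] := popov_form_exists M.
have : exists s, exists Q, @popov_form_of _ _ _ M Q /\ s = pivots Q.
  by exists (pivots Q), Q.
rewrite /pivot_support => /(epsilon_spec (inhabits [::])) [Q' [[Q'popov MQ'] ->]].
exact: popov_pivots Q'popov MQ'.
Qed.

Lemma mulmx_right_kernel_basis m n k (A : 'M[P]_(m, n)) (K : 'M[P]_(n, k)) :
  right_kernel_basis A K -> A *m K = 0.
Proof.
move=> [AK _]; apply/matrixP => i j.
have : A *m (K *m (delta_mx j 0 : 'cV_k)) = 0 by apply/(AK _); exists (delta_mx j 0).
by rewrite mulmxA -colE => /matrixP /(_ i 0); rewrite !mxE.
Qed.

Lemma mulmx_left_kernel_basis n k l (K : 'M[P]_(n, k)) (R : 'M[P]_(l, n)) :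
  left_kernel_basis K R -> R *m K = 0.
Proof.
move=> [KR _]; apply/row_matrixP => i; rewrite row_mul row0.
by apply/(KR _); exists (delta_mx 0 i : 'rV_l); rewrite -rowE.
Qed.

Section KernelBases.
Variables (m n r : nat) (A : 'M[P]_(m, n)) (K : 'M[P]_(n, n - r)) (R : 'M[P]_(r, n)).
Hypotheses (rankA : prank A = r)
  (AK : right_kernel_basis A K) (KR : left_kernel_basis K R).
Local Notation tofrac := (@FracField.tofrac P).

Lemma in_rowmod_left_kernel p : in_rowmod A p -> in_rowmod R p.
Proof.
move=> [c ->]; apply/(proj1 KR _).
by rewrite -mulmxA (mulmx_right_kernel_basis AK) mulmx0.
Qed.

(* Over F(x), the row space of A lies in the left kernel of K and both have
   dimension r; clearing denominators brings a multiple of p back into the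
   row module of A. *)
Lemma in_rowmod_saturate p :
  in_rowmod R p -> exists2 f : P, f != 0 & in_rowmod A (f *: p).
Proof.
move=> Rp; have pK : p *m K = 0.
  by case: Rp => d ->; rewrite -mulmxA (mulmx_left_kernel_basis KR) mulmx0.
have rankK : \rank (map_mx tofrac K) = (n - r)%N.
  rewrite -mxrank_tr map_trmx -[X in X = _]/(prank _); apply: prank_row_free => c cK0.
  apply: trmx_inj; rewrite trmx0; apply: (proj2 AK).
  by rewrite -(trmxK K) -trmx_mul cK0 trmx0.
have le_rn : (r <= n)%N by rewrite -rankA rank_leq_col.
have A_ker : (map_mx tofrac A <= kermx (map_mx tofrac K))%MS.
  by apply/sub_kermxP; rewrite -map_mxM (mulmx_right_kernel_basis AK) map_tofrac_mx0.
have ker_A : (kermx (map_mx tofrac K) <= map_mx tofrac A)%MS.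
  rewrite -(mxrank_leqif_sup A_ker).2 mxrank_ker rankK.
  by rewrite -[\rank _]/(prank A) rankA; apply/eqP; lia.
have /submxP [D pD] : (map_mx tofrac p <= map_mx tofrac A)%MS.
  apply: submx_trans ker_A; apply/sub_kermxP.
  by rewrite -map_mxM pK map_tofrac_mx0.
have [f [c [f0 cD]]] := rowV_clear_den D.
exists f => //; exists c; apply: map_tofrac_inj.
by rewrite map_mxM cD -scalemxAl -pD map_mxZ.
Qed.

Lemma module_pivot_kernel x : module_pivot A x <-> module_pivot R x.
Proof.
split.
  by move=> [p [Ap p0 px]]; exists p; split => //; apply: in_rowmod_left_kernel.
move=> [p [/in_rowmod_saturate [f f0 Afp] p0 <-]].
by have [fp0 fp_piv] := pivot_indexZ f0 p0; exists (f *: p).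
Qed.

End KernelBases.
End PivotSupport.

Unset Implicit Arguments.

Theorem lemma4p2 (F : fieldType) (m n : nat) (A : 'M[{poly F}]_(m, n))
  (r : nat) (hr : prank A = r) (hr1 : (1 <= r)%N)
  (K : 'M[{poly F}]_(n, n - r)) (R : 'M[{poly F}]_(r, n)) :
  right_kernel_basis A K -> left_kernel_basis K R ->
  pivot_support A = pivot_support R.
Proof.
move=> AK KR.
have [sortedA memA] := pivot_support_spec A.
have [sortedR memR] := pivot_support_spec R.
apply: (irr_sorted_eq ltn_trans ltnn sortedA sortedR) => x.
by apply/idP/idP => [/memA/(module_pivot_kernel hr AK KR)/memR
                    |/memR/(module_pivot_kernel hr AK KR)/memA].
Qed.
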